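(* Let $R$ be a finite set of $n$ robots, with coordination space $\chi=\mathbb{R}^n$, obstacle region, dynamics, brake-safe set $B_G$ and control law $g^G$ as described in the context, where $G$ is any directed graph on vertex set $R$. Let $s\in B_G$ and let $\mathbf u\in\mathbf U$ be a control satisfying, componentwise, $$\forall k\in\mathbb{N},\quad \mathbf u(k)\le g^G(\Phi(k,s,\mathbf u)).$$ Then $\Phi(k,s,\mathbf u)\in B_G$ for all $k\in\mathbb{N}$, and $\pi_x(\Phi(t,s,\mathbf u))\in\chi^{\mathrm{free}}_G$ for all $t\ge0$.
   Context: Robots $i\in R$ move along fixed paths; $x_i\in\mathbb{R}$ is the curvilinear coordinate of robot $i$, $x=(x_i)_{i\in R}\in\chi:=\mathbb{R}^n$, and $\{\mathbf e_i\}$ is the canonical basis of $\chi$. For each unordered pair $\{i,j\}$, $\chi^{\mathrm{obs}}_{ij}\subset\chi$ (configurations where $i$ and $j$ collide) is an open cylinder of the form $C_{ij}+\mathrm{span}\{\mathbf e_k:k\ne i,j\}$ where $C_{ij}$ is an open bounded convex subset of $\mathrm{span}\{\mathbf e_i,\mathbf e_j\}$ (possibly empty); $\chi^{\mathrm{obs}}=\bigcup_{\{i,j\}}\chi^{\mathrm{obs}}_{ij}$. For $i\neq j$ define $\chi^{\mathrm{obs}}_{i\succ j}:=\chi^{\mathrm{obs}}_{ij}-\mathbb{R}_+\mathbf e_i+\mathbb{R}_+\mathbf e_j$ (Minkowski sum). A priority graph is a directed graph $G$ with vertex set $R$ and edge set $E(G)$; an edge $(i,j)$ means $i$ has priority over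 $j$. Set $\chi^{\mathrm{obs}}_G:=\bigcup_{(i,j)\in E(G)}\chi^{\mathrm{obs}}_{i\succ j}$, $\chi^{\mathrm{free}}_G:=\chi\setminus\chi^{\mathrm{obs}}_G$. Dynamics: robot $i$ has state $s_i=(x_i,v_i)\in S_i:=\mathbb{R}\times[0,\overline v_i]$ with speed limit $\overline v_i\ge 0$, and $\dot x_i=v_i$, $\dot v_i=\mathbf u_i(t)\,\delta(\mathbf u_i(t),v_i(t))$, where $\delta(u,v)=0$ if ($v=0$ and $u<0$) or ($v=\overline v_i$ and $u>0$), and $\delta=1$ otherwise. Controls take values in $U_i=[\underline u_i,\overline u_i]$ with $\underline u_i<0<\overline u_i$ and are piecewise constant on each slot $[k,k+1)$, $k\in\mathbb{N}$; $\mathbf U_i$ is the set of such controls, $\mathbf U=\prod_i\mathbf U_i$, $S=\prod_i S_i$, $U=\prod_i U_i$. $\Phi_i(t,s_i,\mathbf u_i)$ is the resulting flow of robot $i$ from $s_i$, and $\Phi(t,s,\mathbf u)=(\Phi_i(t,s_i,\mathbf u_i))_i$. $\underline{\mathbf u}$ denotes the constant control equal to $(\underline u_i)_i$. $\pi_x(s)=x$. Brake-safe states: $B_G:=\{s\in S:\ \pi_x(\Phi(t,s,\underline{\mathbf u}))\in\chi^{\mathrm{free}}_G\ \forall t\ge0\}$. Impulse control: $\mathbf u_i^{\mathrm{impulse}}(t)=\overline u_i$ for $t\in[0,1)$ and $=\underline u_i$ for $t\ge1$. Worst-case control w.r.t. $i$: $\tilde{\mathbf u}^i$ with $\tilde{\mathbf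 u}^i_i=\mathbf u_i^{\mathrm{impulse}}$ and $\tilde{\mathbf u}^i_j$ the constant control $\underline u_j$ for $j\ne i$. Control law $g^G:S\to U$: $g^G_i(s)=\underline u_i$ if there exists $(j,i)\in E(G)$ and $t\ge0$ with $\pi_x(\Phi(t,s,\tilde{\mathbf u}^i))\in\chi^{\mathrm{obs}}_{j\succ i}$; otherwise $g^G_i(s)=\overline u_i$. *)

From Stdlib Require Import Reals Lra ZArith ClassicalDescription.
From Coquelicot Require Import Coquelicot.
Open Scope R_scope.

(* Robots are the indices 0..n-1 (nat, i < n).  Coordinates / states / controls
   are functions on nat; only indices i < n are meaningful. *)

(* C i j a b : (x_i, x_j) = (a, b) lies in the 2D collision set C_ij. *)
Definition obs_ij (C : nat -> nat -> R -> R -> Prop) (i j : nat) (x : nat -> R) : Prop :=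
  C i j (x i) (x j).

(* chi^obs_{i > j} = chi^obs_ij - R_+ e_i + R_+ e_j  (Minkowski sum) *)
Definition obs_succ (C : nat -> nat -> R -> R -> Prop) (i j : nat) (x : nat -> R) : Prop :=
  exists a b : R, 0 <= a /\ 0 <= b /\
    obs_ij C i j (fun k => if Nat.eqb k i then x k + a
                           else if Nat.eqb k j then x k - b else x k).

(* a priority graph on {0..n-1}: edge relation E; self loops are ignored *)
Definition obs_G (n : nat) (C : nat -> nat -> R -> R -> Prop) (E : nat -> nat -> Prop)
  (x : nat -> R) : Prop :=
  exists i j, (i < n)%nat /\ (j < n)%nat /\ i <> j /\ E i j /\ obs_succ C i j x.

Definition free_G n C E (x : nat -> R) : Prop := ~ obs_G n C E x.

Definition open2 (A : R -> R -> Prop) : Prop :=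
  forall a b, A a b -> exists eps, 0 < eps /\
    forall a' b', Rabs (a' - a) < eps -> Rabs (b' - b) < eps -> A a' b'.
Definition bounded2 (A : R -> R -> Prop) : Prop :=
  exists M, forall a b, A a b -> Rabs a <= M /\ Rabs b <= M.
Definition convex2 (A : R -> R -> Prop) : Prop :=
  forall a b a' b' l, A a b -> A a' b' -> 0 <= l <= 1 ->
    A (l * a + (1 - l) * a') (l * b + (1 - l) * b').

Definition clamp (vm y : R) : R := Rmax 0 (Rmin vm y).

(* Flow of one robot on one slot with constant control u, for duration tau in [0,1],
   starting from (x, v) with v in [0, vm]: the solution of
   x' = v, v' = u * delta(u, v), i.e. v saturates at 0 and vm. *)
Definition step1 (vm : R) (p : R * R) (u tau : R) : R * R :=
  (fst p + RInt (fun r => clamp vm (snd p + u * r)) 0 tau, clamp vm (snd p + u * tau)).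

Fixpoint flow_nat (vm : R) (p : R * R) (u : nat -> R) (k : nat) : R * R :=
  match k with
  | O => p
  | S k' => step1 vm (flow_nat vm p u k') (u k') 1
  end.

Definition floor_nat (t : R) : nat := Z.to_nat (Int_part t).

(* Phi_i(t, s_i, u_i) for t >= 0; a control is the sequence of its slot values. *)
Definition flow1 (vm : R) (p : R * R) (u : nat -> R) (t : R) : R * R :=
  let k := floor_nat t in step1 vm (flow_nat vm p u k) (u k) (t - INR k).

(* state: s i = (x_i, v_i); control: u i k = value of u_i on [k, k+1) *)
Definition Phi (vmax : nat -> R) (t : R) (s : nat -> R * R) (u : nat -> nat -> R)
  : nat -> R * R := fun i => flow1 (vmax i) (s i) (u i) t.

Definition pi_x (s : nat -> R * R) : nat -> R := fun i => fst (s i).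

Definition in_S (n : nat) (vmax : nat -> R) (s : nat -> R * R) : Prop :=
  forall i, (i < n)%nat -> 0 <= snd (s i) <= vmax i.

Definition in_U (n : nat) (ulo uhi : nat -> R) (u : nat -> nat -> R) : Prop :=
  forall i k, (i < n)%nat -> ulo i <= u i k <= uhi i.

Definition ubrake (ulo : nat -> R) : nat -> nat -> R := fun i _ => ulo i.
Definition uimpulse (ulo uhi : nat -> R) (i : nat) : nat -> R :=
  fun k => match k with O => uhi i | _ => ulo i end.
Definition uworst (ulo uhi : nat -> R) (i : nat) : nat -> nat -> R :=
  fun j => if Nat.eqb j i then uimpulse ulo uhi j else (fun _ => ulo j).

Definition brake_safe n C E vmax ulo (s : nat -> R * R) : Prop :=
  in_S n vmax s /\
  forall t, 0 <= t -> free_G n C E (pi_x (Phi vmax t s (ubrake ulo))).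

Definition danger n C (E : nat -> nat -> Prop) vmax ulo uhi (s : nat -> R * R) (i : nat) : Prop :=
  exists j, (j < n)%nat /\ j <> i /\ E j i /\
    exists t, 0 <= t /\ obs_succ C j i (pi_x (Phi vmax t s (uworst ulo uhi i))).

Definition gG n C E vmax ulo uhi (s : nat -> R * R) (i : nat) : R :=
  if excluded_middle_informative (danger n C E vmax ulo uhi s i) then ulo i else uhi i.

From Stdlib Require Import Reals Lra Lia ZArith ClassicalDescription.
From Coquelicot Require Import Coquelicot.
Open Scope R_scope.

(* Positions are nondecreasing in the initial state and in the controls, and the
   shadow region chi_{i>j} is preserved when x_i decreases or x_j increases.
   From the brake-safe state at time k, consider applying u(k) for one slot and
   then braking, and suppose (i, j) in G collide in chi_{i>j}.  If g^G_j brakes,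
   then u_j(k) is braking, and lowering i's control to braking yields a collision
   of the pure braking trajectory.  Otherwise raising j's control to the impulse
   and lowering everyone else's to braking yields a collision of the worst-case
   trajectory w.r.t. j, so g^G_j would have braked.  This one-slot-then-brake
   trajectory agrees with the actual one on [k, k+1] and with braking from the
   state at time k+1, which gives both conclusions by induction on k. *)

Lemma lipschitz_continuous (f : R -> R) (K x : R) : 0 <= K ->
  (forall a b, Rabs (f a - f b) <= K * Rabs (a - b)) -> continuous f x.
Proof.
  intros HK Hf. apply filterlim_locally. intros eps.
  assert (Hd : 0 < eps / (K + 1)) by (apply Rdiv_lt_0_compat; [apply cond_pos | lra]).
  exists (mkposreal _ Hd). intros y Hy.
  unfold ball in *; simpl in *; unfold AbsRing_ball, abs, minus, plus, opp in *; simpl in *.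
  apply Rle_lt_trans with (K * Rabs (y + - x)); [apply Hf |].
  apply Rle_lt_trans with ((K + 1) * Rabs (y + - x)); [pose proof (Rabs_pos (y + - x)); nra |].
  replace (pos eps) with ((K + 1) * (eps / (K + 1))) by (field; lra).
  apply Rmult_lt_compat_l; lra.
Qed.

Lemma clamp_le_homo vm a b : a <= b -> clamp vm a <= clamp vm b.
Proof. unfold clamp, Rmax, Rmin; repeat destruct Rle_dec; lra. Qed.

Lemma clamp_lipschitz vm a b : Rabs (clamp vm a - clamp vm b) <= Rabs (a - b).
Proof.
  unfold clamp, Rmax, Rmin, Rabs; repeat destruct Rle_dec; repeat destruct Rcase_abs; lra.
Qed.

Lemma clamp_id vm a : 0 <= a <= vm -> clamp vm a = a.
Proof. unfold clamp, Rmax, Rmin; repeat destruct Rle_dec; lra. Qed.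

Lemma clamp_range vm a : 0 <= vm -> 0 <= clamp vm a <= vm.
Proof. unfold clamp, Rmax, Rmin; repeat destruct Rle_dec; lra. Qed.

Lemma ex_RInt_clamp_affine vm v c a b : ex_RInt (fun r => clamp vm (v + c * r)) a b.
Proof.
  apply (@ex_RInt_continuous R_CompleteNormedModule). intros z _.
  apply lipschitz_continuous with (Rabs c); [apply Rabs_pos |]. intros r r'.
  eapply Rle_trans; [apply clamp_lipschitz |].
  rewrite <- Rabs_mult. right; f_equal; ring.
Qed.

Lemma step1_0 vm p c : 0 <= snd p <= vm -> step1 vm p c 0 = p.
Proof.
  destruct p as [x v]; simpl; intros Hv. unfold step1; simpl.
  rewrite RInt_point, Rmult_0_r, (Rplus_0_r v), clamp_id by exact Hv.
  unfold zero; simpl. f_equal; ring.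
Qed.

Lemma step1_le_homo vm p p' c c' tau :
  fst p <= fst p' -> snd p <= snd p' -> c <= c' -> 0 <= tau ->
  fst (step1 vm p c tau) <= fst (step1 vm p' c' tau) /\
  snd (step1 vm p c tau) <= snd (step1 vm p' c' tau).
Proof.
  intros Hx Hv Hc Htau. unfold step1; simpl; split.
  - apply Rplus_le_compat; [exact Hx |].
    apply RInt_le; auto using ex_RInt_clamp_affine.
    intros r Hr. apply clamp_le_homo. nra.
  - apply clamp_le_homo. nra.
Qed.

Lemma flow_nat_le_homo vm p p' c c' k :
  fst p <= fst p' -> snd p <= snd p' -> (forall m, c m <= c' m) ->
  fst (flow_nat vm p c k) <= fst (flow_nat vm p' c' k) /\
  snd (flow_nat vm p c k) <= snd (flow_nat vm p' c' k).
Proof.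
  intros Hx Hv Hc. induction k as [|k [IHx IHv]]; simpl; auto.
  apply step1_le_homo; auto; lra.
Qed.

Lemma flow_nat_add vm p c k m :
  flow_nat vm p c (k + m) = flow_nat vm (flow_nat vm p c k) (fun l => c (k + l)%nat) m.
Proof.
  induction m as [|m IH]; simpl; [now rewrite Nat.add_0_r |].
  now rewrite Nat.add_succ_r; simpl; rewrite IH.
Qed.

Lemma floor_nat_spec t : 0 <= t -> INR (floor_nat t) <= t < INR (floor_nat t) + 1.
Proof.
  intros Ht. unfold floor_nat. destruct (base_Int_part t) as [Hlo Hhi].
  assert (Hz : (0 <= Int_part t)%Z).
  { destruct (Z_le_gt_dec 0 (Int_part t)) as [Hle | Hgt]; [exact Hle |].
    assert (IZR (Int_part t) <= -1) by (apply IZR_le; lia). lra. }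
  rewrite INR_IZR_INZ, Z2Nat.id by exact Hz. lra.
Qed.

Lemma floor_nat_unique t k : INR k <= t < INR k + 1 -> floor_nat t = k.
Proof.
  intros Hk. unfold floor_nat, Int_part.
  rewrite <- (tech_up t (Z.of_nat k + 1)) by (rewrite plus_IZR, <- INR_IZR_INZ; lra).
  now rewrite Z.add_simpl_r, Nat2Z.id.
Qed.

Lemma flow1_INR vm p c k : 0 <= snd p <= vm -> flow1 vm p c (INR k) = flow_nat vm p c k.
Proof.
  intros Hp. unfold flow1; cbv zeta.
  rewrite (floor_nat_unique (INR k) k), Rminus_diag by lra.
  apply step1_0. destruct k; simpl; [exact Hp |].
  unfold step1; simpl. apply clamp_range. lra.
Qed.

Lemma flow1_INR_add vm p c k t : 0 <= t ->
  flow1 vm p c (INR k + t) = flow1 vm (flow_nat vm p c k) (fun l => c (k + l)%nat) t.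
Proof.
  intros Ht. pose proof (floor_nat_spec t Ht) as Hfl. unfold flow1; cbv zeta.
  rewrite (floor_nat_unique (INR k + t) (k + floor_nat t)) by (rewrite plus_INR; lra).
  rewrite flow_nat_add, plus_INR. f_equal. ring.
Qed.

Lemma flow1_first_slot vm p c tau : 0 <= snd p <= vm -> 0 <= tau <= 1 ->
  flow1 vm p c tau = step1 vm p (c 0%nat) tau.
Proof.
  intros Hp [Hlo Hhi]. destruct (Rlt_or_le tau 1) as [Hlt | Hge].
  - unfold flow1; cbv zeta. rewrite (floor_nat_unique tau 0) by (simpl; lra).
    simpl. f_equal. ring.
  - replace tau with (INR 1) by (simpl; lra). now rewrite flow1_INR.
Qed.

Lemma flow1_fst_le_homo vm p p' c c' t : 0 <= t ->
  fst p <= fst p' -> snd p <= snd p' -> (forall m, c m <= c' m) ->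
  fst (flow1 vm p c t) <= fst (flow1 vm p' c' t).
Proof.
  intros Ht Hx Hv Hc. pose proof (floor_nat_spec t Ht). unfold flow1; cbv zeta.
  destruct (flow_nat_le_homo vm p p' c c' (floor_nat t) Hx Hv Hc).
  apply step1_le_homo; auto; lra.
Qed.

Lemma obs_succ_shift C i j x x' : i <> j ->
  x' i <= x i -> x j <= x' j -> obs_succ C i j x -> obs_succ C i j x'.
Proof.
  intros Hij Hi Hj [a [b [Ha [Hb Hobs]]]].
  assert (Hji : Nat.eqb j i = false) by (apply Nat.eqb_neq; auto).
  unfold obs_ij in *. rewrite !Nat.eqb_refl, Hji in *.
  exists (a + (x i - x' i)), (b + (x' j - x j)). do 2 (split; [lra |]).
  unfold obs_ij. rewrite !Nat.eqb_refl, Hji.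
  replace (x' i + (a + (x i - x' i))) with (x i + a) by ring.
  replace (x' j - (b + (x' j - x j))) with (x j - b) by ring. exact Hobs.
Qed.

Lemma free_G_ext n C E x x' : (forall i, (i < n)%nat -> x i = x' i) ->
  free_G n C E x -> free_G n C E x'.
Proof.
  intros Hxx' Hfree [i [j [Hi [Hj [Hij [Eij Hobs]]]]]]. apply Hfree.
  exists i, j. do 4 (split; [auto |]).
  apply obs_succ_shift with x'; rewrite ?Hxx' by auto; auto; lra.
Qed.

Definition shift_ctrl (k : nat) (u : nat -> nat -> R) : nat -> nat -> R :=
  fun i m => u i (k + m)%nat.

Definition then_brake (ulo w : nat -> R) : nat -> nat -> R :=
  fun i m => match m with O => w i | S _ => ulo i end.

Section Trajectories.

Variables (n : nat) (vmax : nat -> R).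

Lemma in_S_Phi s c t : in_S n vmax s -> in_S n vmax (Phi vmax t s c).
Proof.
  intros Hs i Hi. unfold Phi, flow1, step1; simpl.
  apply clamp_range. specialize (Hs i Hi). lra.
Qed.

Lemma Phi_0 s c i : in_S n vmax s -> (i < n)%nat -> Phi vmax 0 s c i = s i.
Proof. intros Hs Hi. exact (flow1_INR _ _ _ 0 (Hs i Hi)). Qed.

Lemma Phi_INR_add s c k t i : in_S n vmax s -> 0 <= t -> (i < n)%nat ->
  Phi vmax (INR k + t) s c i = Phi vmax t (Phi vmax (INR k) s c) (shift_ctrl k c) i.
Proof.
  intros Hs Ht Hi. unfold Phi. rewrite flow1_INR_add, flow1_INR by auto. reflexivity.
Qed.

Lemma Phi_first_slot s c c' tau i : in_S n vmax s -> 0 <= tau <= 1 -> (i < n)%nat ->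
  c i 0%nat = c' i 0%nat -> Phi vmax tau s c i = Phi vmax tau s c' i.
Proof.
  intros Hs Htau Hi Hc. unfold Phi. now rewrite !flow1_first_slot, Hc by auto.
Qed.

Lemma Phi_fst_le_homo s c c' t i : 0 <= t -> (forall m, c i m <= c' i m) ->
  fst (Phi vmax t s c i) <= fst (Phi vmax t s c' i).
Proof. intros Ht Hc. apply flow1_fst_le_homo; auto; lra. Qed.

Lemma Phi_slot ulo s u k tau i : in_S n vmax s -> 0 <= tau <= 1 -> (i < n)%nat ->
  Phi vmax (INR k + tau) s u i
  = Phi vmax tau (Phi vmax (INR k) s u) (then_brake ulo (fun j => u j k)) i.
Proof.
  intros Hs Htau Hi. rewrite Phi_INR_add by (auto; lra).
  apply Phi_first_slot; [apply in_S_Phi, Hs | exact Htau | exact Hi |].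
  unfold shift_ctrl; simpl. now rewrite Nat.add_0_r.
Qed.

End Trajectories.

Lemma brake_safe_ext n C E vmax ulo s s' : (forall i, (i < n)%nat -> s i = s' i) ->
  brake_safe n C E vmax ulo s -> brake_safe n C E vmax ulo s'.
Proof.
  intros Hss' [HS Hfree]. split.
  - intros i Hi. rewrite <- Hss' by exact Hi. auto.
  - intros t Ht. refine (free_G_ext _ _ _ _ _ _ (Hfree t Ht)).
    intros i Hi. unfold pi_x, Phi. now rewrite Hss'.
Qed.

Section SafeSlot.

Variables (n : nat) (C : nat -> nat -> R -> R -> Prop) (E : nat -> nat -> Prop).
Variables (vmax ulo uhi : nat -> R) (sk : nat -> R * R) (w : nat -> R).
Hypothesis Hsafe : brake_safe n C E vmax ulo sk.
Hypothesis Hw : forall i, (i < n)%nat -> ulo i <= w i <= uhi i.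
Hypothesis Hwg : forall i, (i < n)%nat -> w i <= gG n C E vmax ulo uhi sk i.

Lemma then_brake_free tau : 0 <= tau ->
  free_G n C E (pi_x (Phi vmax tau sk (then_brake ulo w))).
Proof.
  destruct Hsafe as [_ Hbrake]. intros Htau [i [j [Hi [Hj [Hij [Eij Hobs]]]]]].
  assert (Hbrake_le : fst (Phi vmax tau sk (ubrake ulo) i)
                      <= fst (Phi vmax tau sk (then_brake ulo w) i)).
  { apply Phi_fst_le_homo; auto. pose proof (Hw i Hi). intros [|m]; unfold ubrake; simpl; lra. }
  pose proof (Hwg j Hj) as Hwj. unfold gG in Hwj.
  destruct (excluded_middle_informative (danger n C E vmax ulo uhi sk j)) as [Hd | Hnd].
  - apply (Hbrake tau Htau). exists i, j. do 4 (split; [auto |]).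
    apply obs_succ_shift with (pi_x (Phi vmax tau sk (then_brake ulo w))); auto.
    apply Phi_fst_le_homo; auto. pose proof (Hw j Hj). intros [|m]; unfold ubrake; simpl; lra.
  - apply Hnd. exists i. do 3 (split; [auto |]). exists tau. split; [exact Htau |].
    apply obs_succ_shift with (pi_x (Phi vmax tau sk (then_brake ulo w))); auto.
    + unfold pi_x, Phi, uworst; cbv beta.
      replace (Nat.eqb i j) with false by (symmetry; now apply Nat.eqb_neq).
      exact Hbrake_le.
    + unfold pi_x, Phi, uworst; cbv beta. rewrite Nat.eqb_refl.
      apply Phi_fst_le_homo; auto. pose proof (Hw j Hj). intros [|m]; unfold ubrake; simpl; lra.
Qed.

Lemma brake_safe_after_slot :
  brake_safe n C E vmax ulo (Phi vmax 1 sk (then_brake ulo w)).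
Proof.
  split; [apply in_S_Phi, Hsafe |]. intros t Ht.
  refine (free_G_ext _ _ _ _ _ _ (then_brake_free (1 + t) ltac:(lra))).
  intros i Hi. unfold pi_x. now rewrite (Phi_INR_add n vmax sk _ 1) by (apply Hsafe || auto).
Qed.

End SafeSlot.

Theorem theorem2
  (n : nat) (C : nat -> nat -> R -> R -> Prop)
  (vmax ulo uhi : nat -> R) (E : nat -> nat -> Prop)
  (HCsym : forall i j a b, C i j a b <-> C j i b a)
  (HCopen : forall i j, (i < n)%nat -> (j < n)%nat -> i <> j -> open2 (C i j))
  (HCbdd : forall i j, (i < n)%nat -> (j < n)%nat -> i <> j -> bounded2 (C i j))
  (HCcvx : forall i j, (i < n)%nat -> (j < n)%nat -> i <> j -> convex2 (C i j))
  (Hvmax : forall i, (i < n)%nat -> 0 <= vmax i)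
  (Hulo : forall i, (i < n)%nat -> ulo i < 0)
  (Huhi : forall i, (i < n)%nat -> 0 < uhi i)
  (s : nat -> R * R) (u : nat -> nat -> R)
  (Hs : brake_safe n C E vmax ulo s)
  (Hu : in_U n ulo uhi u)
  (Hg : forall (k : nat) i, (i < n)%nat ->
          u i k <= gG n C E vmax ulo uhi (Phi vmax (INR k) s u) i) :
  (forall k : nat, brake_safe n C E vmax ulo (Phi vmax (INR k) s u)) /\
  (forall t, 0 <= t -> free_G n C E (pi_x (Phi vmax t s u))).
Proof.
  pose proof (proj1 Hs) as HsS.
  set (sk k := Phi vmax (INR k) s u).
  set (tb k := then_brake ulo (fun i => u i k)).
  assert (Hsafe : forall k, brake_safe n C E vmax ulo (sk k)).
  { induction k as [|k IH].
    - apply (brake_safe_ext n _ _ _ _ s); [| exact Hs].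
      intros i Hi. symmetry. exact (Phi_0 n vmax s u i HsS Hi).
    - apply (brake_safe_ext n _ _ _ _ (Phi vmax 1 (sk k) (tb k))).
      + intros i Hi. unfold sk. rewrite S_INR. symmetry.
        apply (Phi_slot n); auto; lra.
      + apply (brake_safe_after_slot _ _ _ _ _ uhi); auto. }
  split; [exact Hsafe |]. intros t Ht.
  pose proof (floor_nat_spec t Ht) as Hfl. set (k := floor_nat t) in Hfl.
  apply (free_G_ext _ _ _ (pi_x (Phi vmax (t - INR k) (sk k) (tb k)))).
  - intros i Hi. unfold pi_x, sk, tb. rewrite <- (Phi_slot n) by (auto; lra).
    do 2 f_equal. ring.
  - apply (then_brake_free _ _ _ _ _ uhi); auto; lra.
Qed.
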